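(* For every positive integer $a$, $\Gamma(a,2a)=1$; for every integer $a\ge 2$, $\Gamma(a,2a-1)=2$.
   Context: For relatively prime positive integers $p,q$, exactly one of the equations $px+qy=\frac{(p-1)(q-1)}{2}$ (Equation 1) and $px+qy+1=\frac{(p-1)(q-1)}{2}$ (Equation 2) has a solution in nonnegative integers $(x,y)$. For positive integers $a,b$ with $d=\gcd(a,b)$, $\Gamma(a,b)=1$ if Equation 1 with $(p,q)=(a/d,b/d)$ has a nonnegative integer solution, and $\Gamma(a,b)=2$ otherwise. *)

From mathcomp Require Import all_boot.
From mathcomp Require Import boolp.

(* Equation 1 for relatively prime p, q:
   p x + q y = (p-1)(q-1)/2 has a solution in nonnegative integers.
   For coprime p, q the product (p-1)(q-1) is even, so ./2 is exact division. *)
Definition eq1_solvable (p q : nat) : Prop :=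
  exists x y : nat, p * x + q * y = ((p - 1) * (q - 1))./2.

Definition Gamma (a b : nat) : nat :=
  let d := gcdn a b in
  if `[< eq1_solvable (a %/ d) (b %/ d) >] then 1 else 2.

From mathcomp Require Import all_boot.
From mathcomp Require Import boolp zify.

(* For [b = 2a] the reduced pair is [(1, 2)], whose Equation 1 reads [x + 2y = 0].
   For [b = 2a - 1] the pair is coprime and Equation 1 reads
   [a x + (2a - 1) y = (a - 1)^2]; modulo [a] this forces [y = -1], so
   [y >= a - 1] and already [(2a - 1) y] exceeds the right-hand side. *)

Lemma eq1_solvable1l (q : nat) : eq1_solvable 1 q.
Proof. by exists 0, 0; rewrite !muln0. Qed.

Lemma Gamma_dvd (a b : nat) : 0 < a -> a %| b -> Gamma a b = 1.
Proof.
move=> a_gt0 /gcdn_idPl ab_gcd; rewrite /Gamma ab_gcd divnn a_gt0.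
by case: asboolP => // /(_ (eq1_solvable1l _)).
Qed.

Lemma Gamma_coprime_unsolvable (a b : nat) :
  coprime a b -> ~ eq1_solvable a b -> Gamma a b = 2.
Proof.
move=> /eqP ab_coprime no_sol; rewrite /Gamma ab_coprime !divn1.
by case: asboolP => // /no_sol.
Qed.

Lemma coprime_double_pred (a : nat) : 0 < a -> coprime a (2 * a - 1).
Proof.
case: a => // n _; rewrite /coprime.
have -> : 2 * n.+1 - 1 = 1 * n.+1 + n by lia.
by rewrite gcdnMDl; exact: coprimeSn.
Qed.

Lemma eq1_unsolvable_double_pred (a : nat) : 1 < a -> ~ eq1_solvable a (2 * a - 1).
Proof.
case: a => // n n_gt0 [x [y]].
have -> : 2 * n.+1 - 1 = n.*2.+1 by lia.
rewrite !subn1 /= -doubleMr doubleK => sol.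
have shifted : n.+1 * (x + 2 * y + 2) = n.+1 * n.+1 + y.+1 by nia.
have n_le_y : n <= y.
  rewrite -ltnS; apply: dvdn_leq => //.
  by rewrite -(dvdn_addr _ (dvdn_mull n.+1 (dvdnn n.+1))) -shifted dvdn_mulr.
nia.
Qed.

Theorem corollary2p1 :
  (forall a : nat, 0 < a -> Gamma a (2 * a) = 1) /\
  (forall a : nat, 2 <= a -> Gamma a (2 * a - 1) = 2).
Proof.
split=> a a_ge.
- exact/Gamma_dvd/dvdn_mull.
- apply: Gamma_coprime_unsolvable; first exact/coprime_double_pred/ltnW.
  exact: eq1_unsolvable_double_pred.
Qed.
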